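(* Let $a\ge b\ge1$ be integers with either $b\ge2$, or $b=1$ and $a\ge5$, and define $c_j,d_j$ ($j\in\mathbb Z_+$) by $c_0=d_0=0$, $c_1=d_1=1$, $c_{k+2}+c_k=a d_{k+1}$, $d_{k+2}+d_k=b c_{k+1}$. Then for all $k\in\mathbb Z_+$: $$bc_k^2+ad_{k+1}^2-abc_kd_{k+1}-abc_k+2ad_{k+1}+a>0,$$ $$bc_{k+1}^2+ad_k^2-abc_{k+1}d_k+2bc_{k+1}-abd_k+b>0.$$
   Context: $\mathbb Z_+=\{0,1,2,\dots\}$. *)

From Stdlib Require Import ZArith.

(* Along each of the two interleaved chains c_0, d_1, c_2, d_3, ... and
   d_0, c_1, d_2, c_3, ... every step is a reflection x |-> a y - x or
   y |-> b x - y, which preserves the binary form b x^2 - a b x y + a y^2.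
   Hence this form takes only the values a and b on the pairs
   (c_k, d_(k+1)) and (c_(k+1), d_k).  When a b >= 4 the chains grow with
   ratio above a/2 resp. b/2, i.e. 2 d_(k+1) > b c_k and 2 c_(k+1) > a d_k.
   Each inequality of the theorem is the form plus a positive multiple of
   one of these gaps. *)
From Stdlib Require Import ZArith Lia.
Open Scope Z_scope.

Definition form (a b x y : Z) : Z := b * x ^ 2 - a * b * x * y + a * y ^ 2.

Lemma form_reflect_l (a b x y : Z) : form a b (a * y - x) y = form a b x y.
Proof. unfold form; ring. Qed.

Lemma form_reflect_r (a b x y : Z) : form a b x (b * x - y) = form a b x y.
Proof. unfold form; ring. Qed.

Lemma half_ratio_swap (m n x y : Z) :
  m * n >= 4 -> n >= 1 -> 0 <= y -> 2 * x > m * y -> n * x > 2 * y.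
Proof. intros; nia. Qed.

Section Chains.

Variables (a b : Z) (c d : nat -> Z).
Hypotheses (c0 : c 0%nat = 0) (d0 : d 0%nat = 0)
           (c1 : c 1%nat = 1) (d1 : d 1%nat = 1).
Hypothesis c_rec : forall k : nat, c (k + 2)%nat + c k = a * d (k + 1)%nat.
Hypothesis d_rec : forall k : nat, d (k + 2)%nat + d k = b * c (k + 1)%nat.

Lemma c_step (k : nat) : c (S (S k)) = a * d (S k) - c k.
Proof.
  specialize (c_rec k); rewrite Nat.add_comm, Nat.add_1_r in c_rec; simpl in c_rec; lia.
Qed.

Lemma d_step (k : nat) : d (S (S k)) = b * c (S k) - d k.
Proof.
  specialize (d_rec k); rewrite Nat.add_comm, Nat.add_1_r in d_rec; simpl in d_rec; lia.
Qed.

Lemma form_chain (k : nat) :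
  form a b (c k) (d (S k)) = a /\ form a b (c (S k)) (d k) = b \/
  form a b (c k) (d (S k)) = b /\ form a b (c (S k)) (d k) = a.
Proof.
  induction k as [|k IH].
  - left; rewrite c0, d0, c1, d1; unfold form; split; ring.
  - rewrite d_step, form_reflect_r, c_step, form_reflect_l; tauto.
Qed.

Lemma form_chain_ge (k : nat) :
  a >= 1 -> b >= 1 ->
  form a b (c k) (d (S k)) >= 1 /\ form a b (c (S k)) (d k) >= 1.
Proof. intros; destruct (form_chain k) as [[-> ->] | [-> ->]]; lia. Qed.

Lemma chain_growth (k : nat) :
  a >= 1 -> b >= 1 -> a * b >= 4 ->
  0 <= c k /\ 0 <= d k /\ 2 * d (S k) > b * c k /\ 2 * c (S k) > a * d k.
Proof.
  intros Ha Hb Hab.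
  induction k as [|k (Hc & Hd & Hdc & Hcd)].
  - rewrite c0, d0, c1, d1; lia.
  - assert (Hdc' : a * d (S k) > 2 * c k)
      by (apply (half_ratio_swap b); lia).
    assert (Hcd' : b * c (S k) > 2 * d k)
      by (apply (half_ratio_swap a); lia).
    rewrite c_step, d_step; lia.
Qed.

End Chains.

Theorem lemma4p2 (a b : Z) (c d : nat -> Z) :
  a >= b -> b >= 1 -> (b >= 2 \/ (b = 1 /\ a >= 5)) ->
  c 0%nat = 0 -> d 0%nat = 0 -> c 1%nat = 1 -> d 1%nat = 1 ->
  (forall k : nat, c (k + 2)%nat + c k = a * d (k + 1)%nat) ->
  (forall k : nat, d (k + 2)%nat + d k = b * c (k + 1)%nat) ->
  forall k : nat,
    b * c k ^ 2 + a * d (k + 1)%nat ^ 2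
      - a * b * c k * d (k + 1)%nat - a * b * c k
      + 2 * a * d (k + 1)%nat + a > 0 /\
    b * c (k + 1)%nat ^ 2 + a * d k ^ 2
      - a * b * c (k + 1)%nat * d k + 2 * b * c (k + 1)%nat
      - a * b * d k + b > 0.
Proof.
  intros Hab Hb Hcase c0 d0 c1 d1 c_rec d_rec k.
  assert (Hab4 : a * b >= 4) by (destruct Hcase; nia).
  rewrite Nat.add_1_r.
  destruct (form_chain_ge a b c d c0 d0 c1 d1 c_rec d_rec k) as [F1 F2]; try lia.
  destruct (chain_growth a b c d c0 d0 c1 d1 c_rec d_rec k)
    as (_ & _ & Gdc & Gcd); try lia.
  unfold form in F1, F2.
  split.
  - assert (a * (2 * d (S k) - b * c k + 1) > 0) by nia; nia.
  - assert (b * (2 * c (S k) - a * d k + 1) > 0) by nia; nia.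
Qed.
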